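(* Let $U$ be a representation of $\tilde W$ on which $z=-1$ acts by $-\mathrm{id}$, and let $\mathfrak u\in U$ satisfy $\tilde r_1\mathfrak u=\zeta_1^{\ell_1}\mathfrak u$ and $\tilde r_2\mathfrak u=\zeta_2^{\ell_2}\mathfrak u$, where $\ell_a\in\{1,\dots,2m_a-1\}$ are odd integers. Then for $a\in\{1,2\}$, \[ O_a^\pm\,\mathfrak u=\pm i\,Q_a(\ell_a\pm1)\,\tilde f_a\mathfrak u,\qquad O_a^\pm O_a^\mp\,\mathfrak u=Q_a(\ell_a\mp1)^2\,\mathfrak u. \]
   Context: Let $x_1,\dots,x_4$ be the standard orthonormal basis of $\mathbb R^4$, with complexification $V=\mathbb C^4$ and the bilinear extension $(\cdot,\cdot)$ of the standard inner product. Fix positive integers $m_1,m_2$ and $\zeta_a=e^{i\pi/m_a}$. Let $\alpha_p=(\sin(p\pi/m_1),-\cos(p\pi/m_1),0,0)$ ($p=1,\dots,2m_1$), $\beta_q=(0,0,\sin(q\pi/m_2),-\cos(q\pi/m_2))$ ($q=1,\dots,2m_2$), $R$ the set of these vectors, $R_+=\{\alpha_1,\dots,\alpha_{m_1},\beta_1,\dots,\beta_{m_2}\}$, and $W\cong D_{2m_1}\times D_{2m_2}$ the group generated by the reflections $s_\alpha$, $\alpha\in R$. Let $\kappa:R\to\mathbb R$ be $W$-invariant (real-valued, standing assumption). If $m_1$ is odd, $\kappa_1$ denotes the common value on all $\alpha_p$; if $m_1$ is even, $\kappa_1=\kappa_{\alpha_p}$ ($p$ odd), $\kappa_2=\kappa_{\alpha_p}$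 ($p$ even); similarly $\kappa_3$ (and $\kappa_4$ when $m_2$ is even) for the $\beta_q$. $Q_a(j)$ ($a\in\{1,2\}$, $j\in\mathbb Z$) equals $m_a\kappa_{2a-1}$ if $m_a$ odd and $j\equiv0\pmod{2m_a}$; $\frac{m_a}{2}(\kappa_{2a}+\kappa_{2a-1})$ if $m_a$ even and $j\equiv0\pmod{2m_a}$; $\frac{m_a}2(\kappa_{2a}-\kappa_{2a-1})$ if $m_a$ even and $j\equiv m_a\pmod{2m_a}$; $0$ otherwise. Let $\mathcal C$ be the complex Clifford algebra generated by $e_1,\dots,e_4$ with $e_je_k+e_ke_j=2\delta_{jk}$, $\gamma:V\to\mathcal C$ linear with $\gamma(x_j)=e_j$, and $\tilde W\subset\mathcal C^\times$ the group generated by all $\gamma(\alpha)$, $\alpha\in R$; $z=-1\in\tilde W$. Put $\tilde s_p=\gamma(\alpha_p)$, $\tilde t_q=\gamma(\beta_q)$, $\tilde f_1=\tilde s_{m_1}$, $\tilde f_2=\tilde t_{m_2}$, $\tilde r_1=z\tilde s_{m_1}\tilde s_1$, $\tilde r_2=z\tilde t_{m_2}\tilde t_1$. Let $z_a^\pm=x_{2a-1}\pm ix_{2a}$, and for $x\in V$ let $O(x)=\sum_{\alpha\in R_+}\kappa_\alpha(x,\alpha)\gamma(\alpha)\in\mathbb C\tilde W$ (this is the image of the one-index symmetry of the Dunkl total angular momentum algebra), acting on $U$; write $O_a^\pm=O(z_a^\pm)$. *)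

From HB Require Import structures.
From mathcomp Require Import all_boot all_order all_algebra.
From mathcomp Require Import complex.
From mathcomp Require Import reals trigo.
Set Implicit Arguments. Unset Strict Implicit. Unset Printing Implicit Defensive.
Import Order.TTheory GRing.Theory Num.Theory.
Local Open Scope ring_scope.

Section Defs.
Context {R : realType}.
Local Notation C := (complex R).
Local Notation Cr x := (Complex x 0).
Local Notation Ci := (Complex 0 1).

Definition vec4 (a b c d : C) : 'rV[C]_4 := \row_(j < 4) nth 0 [:: a; b; c; d] j.
Definition bil (x y : 'rV[C]_4) : C := \sum_(j < 4) x 0 j * y 0 j.

Definition alpha (m p : nat) : 'rV[C]_4 :=
  vec4 (Cr (sin (p%:R * pi / m%:R))) (Cr (- cos (p%:R * pi / m%:R))) 0 0.
Definition beta (m q : nat) : 'rV[C]_4 :=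
  vec4 0 0 (Cr (sin (q%:R * pi / m%:R))) (Cr (- cos (q%:R * pi / m%:R))).
Definition rootv (a : 'I_2) (m p : nat) : 'rV[C]_4 :=
  if val a == 0%N then alpha m p else beta m p.

Definition inR (m1 m2 : nat) (v : 'rV[C]_4) : Prop :=
  (exists2 p, (1 <= p <= 2 * m1)%N & v = alpha m1 p) \/
  (exists2 q, (1 <= q <= 2 * m2)%N & v = beta m2 q).

Definition refl (b v : 'rV[C]_4) : 'rV[C]_4 := v - (2 * bil v b / bil b b) *: b.

(* kappa : R -> real, W-invariant (W generated by the reflections s_b, b in R) *)
Definition W_invariant (m1 m2 : nat) (kappa : 'rV[C]_4 -> R) : Prop :=
  forall a b, inR m1 m2 a -> inR m1 m2 b -> kappa (refl b a) = kappa a.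

Definition mm (m1 m2 : nat) (a : 'I_2) : nat := if val a == 0%N then m1 else m2.

(* kappa_{2a-1} = value on roots with odd index, kappa_{2a} = value on roots with even index *)
Definition kodd (m1 m2 : nat) (kappa : 'rV[C]_4 -> R) (a : 'I_2) : R :=
  kappa (rootv a (mm m1 m2 a) 1).
Definition keven (m1 m2 : nat) (kappa : 'rV[C]_4 -> R) (a : 'I_2) : R :=
  kappa (rootv a (mm m1 m2 a) 2).

Definition Qa (m1 m2 : nat) (kappa : 'rV[C]_4 -> R) (a : 'I_2) (j : int) : R :=
  let m := mm m1 m2 a in
  let k1 := kodd m1 m2 kappa a in
  let k2 := keven m1 m2 kappa a in
  if odd m then
    (if (j %% (2 * m)%:Z)%Z == 0 then m%:R * k1 else 0)
  else if (j %% (2 * m)%:Z)%Z == 0 then (m%:R / 2) * (k2 + k1)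
  else if (j %% (2 * m)%:Z)%Z == m%:Z then (m%:R / 2) * (k2 - k1)
  else 0.

(* The complex Clifford algebra of C^4: basis e_A, A a subset of {1..4}
   (e_A = e_{a1}...e_{ak}, a1 < ... < ak), e_A e_B = sgn(A,B) e_{A symdiff B}. *)
Definition clif := {ffun {set 'I_4} -> C}.
Definition clsgn (A B : {set 'I_4}) : C :=
  (-1) ^+ #|[set p : 'I_4 * 'I_4 | [&& p.1 \in A, p.2 \in B & (p.2 < p.1)%N]]|.
Definition symd (A B : {set 'I_4}) : {set 'I_4} := (A :\: B) :|: (B :\: A).
Definition clmul (x y : clif) : clif :=
  [ffun D => \sum_(A : {set 'I_4}) \sum_(B : {set 'I_4})
               (if symd A B == D then clsgn A B * x A * y B else 0)].
Definition clscal (c : C) : clif := [ffun A => if A == set0 then c else 0].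
Definition cl1 : clif := clscal 1.
Definition clz : clif := clscal (-1).
Definition gamma (v : 'rV[C]_4) : clif :=
  [ffun A => \sum_(j < 4) (if A == [set j] then v 0 j else 0)].

(* the group W~ generated by gamma(alpha), alpha in R
   (each generator is its own inverse, so the generated monoid is the group) *)
Inductive Wt (m1 m2 : nat) : clif -> Prop :=
| Wt_one : Wt m1 m2 cl1
| Wt_gen v g : inR m1 m2 v -> Wt m1 m2 g -> Wt m1 m2 (clmul (gamma v) g).

Definition ft (m1 m2 : nat) (a : 'I_2) : clif :=
  gamma (rootv a (mm m1 m2 a) (mm m1 m2 a)).
Definition rt (m1 m2 : nat) (a : 'I_2) : clif :=
  clmul clz (clmul (gamma (rootv a (mm m1 m2 a) (mm m1 m2 a)))
                   (gamma (rootv a (mm m1 m2 a) 1))).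

Definition zeta (m : nat) : C := Complex (cos (pi / m%:R)) (sin (pi / m%:R)).

Definition zvec (a : 'I_2) (s : bool) : 'rV[C]_4 :=
  let y := if s then Ci else - Ci in
  if val a == 0%N then vec4 1 y 0 0 else vec4 0 0 1 y.

(* action of O(x) = sum_{alpha in R_+} kappa_alpha (x, alpha) gamma(alpha) on U *)
Definition Oact (m1 m2 : nat) (kappa : 'rV[C]_4 -> R) (U : lmodType C)
    (rho : clif -> {linear U -> U}) (x : 'rV[C]_4) (u : U) : U :=
  \sum_(p < m1) (Cr (kappa (alpha m1 p.+1)) * bil x (alpha m1 p.+1))
                   *: rho (gamma (alpha m1 p.+1)) u
  + \sum_(q < m2) (Cr (kappa (beta m2 q.+1)) * bil x (beta m2 q.+1))
                   *: rho (gamma (beta m2 q.+1)) u.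

Definition sgnC (s : bool) : C := if s then 1 else -1.
Definition sgnZ (s : bool) : int := if s then 1 else -1.

End Defs.

(* In the plane of the a-th dihedral factor the roots are the unit vectors at
   angles θ_p = pπ/m, so γ(α_p) = sin θ_p e_i - cos θ_p e_j, and products of two
   of them are rotors cos θ + sin θ e_i e_j.  In particular r~_a is the rotor of
   angle π/m and γ(α_(p+1)) = γ(α_p) r~_a, so on an r~_a-eigenvector with
   eigenvalue ζ^l every γ(α_p) acts as -ζ^(lp) f~_a.  Then O(z_a^±) acts as
   ±i (Σ_p κ_p ζ^((l±1)p)) f~_a, and since W-invariance makes κ_p depend only on
   the parity of p, this root-of-unity sum is Q_a(l±1).  Finally r~_a f~_a r~_a = f~_a,
   so f~_a u is an eigenvector with exponent 2m - l, and f~_a^2 = 1; the second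
   identity follows because Q_a(2m - j) = Q_a(j). *)

From HB Require Import structures.
From mathcomp Require Import all_boot all_order all_algebra.
From mathcomp Require Import complex.
From mathcomp Require Import reals trigo.
From mathcomp Require Import ring zify.
Set Implicit Arguments. Unset Strict Implicit. Unset Printing Implicit Defensive.
Import Order.TTheory GRing.Theory Num.Theory.
Local Open Scope ring_scope.

Local Notation Cr x := (Complex x 0).

Ltac complex_eq := apply/eqP; rewrite eq_complex /=; apply/andP; split; apply/eqP.

HB.lock Definition clbase {R : realType} (A : {set 'I_4}) : @clif R :=
  [ffun B => (B == A)%:R].

HB.lock Definition clplane {R : realType} (i j : 'I_4) (a b c d : complex R) : @clif R :=
  a *: clbase set0 + b *: clbase [set i] + c *: clbase [set j] + d *: clbase [set i; j].

Section CliffordAlgebra.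
Variable R : realType.
Local Notation C := (complex R).
Local Notation Cl := (@clif R).
Local Notation clbase := (@clbase R).

Lemma clifD (x y : Cl) D : (x + y) D = x D + y D.
Proof. by rewrite ffunE. Qed.

Lemma clifZ (c : C) (x : Cl) D : (c *: x) D = c * x D.
Proof. by rewrite ffunE. Qed.

Lemma clmulDl (x y w : Cl) : clmul (x + y) w = clmul x w + clmul y w.
Proof.
apply/ffunP => D; rewrite !ffunE -big_split; apply: eq_bigr => A _.
rewrite -big_split; apply: eq_bigr => B _.
by case: ifP => _ /=; rewrite ?addr0 // clifD mulrDr mulrDl.
Qed.

Lemma clmulDr (x y w : Cl) : clmul w (x + y) = clmul w x + clmul w y.
Proof.
apply/ffunP => D; rewrite !ffunE -big_split; apply: eq_bigr => A _.
rewrite -big_split; apply: eq_bigr => B _.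
by case: ifP => _ /=; rewrite ?addr0 // clifD mulrDr.
Qed.

Lemma clmulZl (c : C) (x w : Cl) : clmul (c *: x) w = c *: clmul x w.
Proof.
apply/ffunP => D; rewrite clifZ !ffunE mulr_sumr; apply: eq_bigr => A _.
rewrite mulr_sumr; apply: eq_bigr => B _.
by case: ifP => _; rewrite ?mulr0 // clifZ; ring.
Qed.

Lemma clmulZr (c : C) (x w : Cl) : clmul w (c *: x) = c *: clmul w x.
Proof.
apply/ffunP => D; rewrite clifZ !ffunE mulr_sumr; apply: eq_bigr => A _.
rewrite mulr_sumr; apply: eq_bigr => B _.
by case: ifP => _; rewrite ?mulr0 // clifZ; ring.
Qed.

Lemma clbaseE A D : clbase A D = (D == A)%:R :> C.
Proof. by rewrite clbase.unlock ffunE. Qed.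

Lemma clmul_base A B : clmul (clbase A) (clbase B) = clsgn A B *: clbase (symd A B).
Proof.
apply/ffunP => D; rewrite ffunE clifZ clbaseE (bigD1 A) //=.
rewrite [X in _ + X]big1 => [|A' /negbTE nA']; last first.
  by apply: big1 => B' _; rewrite clbaseE nA' mulr0 mul0r; case: ifP.
rewrite addr0 (bigD1 B) //= [X in _ + X]big1 => [|B' /negbTE nB']; last first.
  by rewrite !clbaseE nB' mulr0; case: ifP.
by rewrite addr0 !clbaseE !eqxx !mulr1 eq_sym; case: ifP; rewrite ?mulr1 ?mulr0.
Qed.

Lemma clsgn_pair (i j : 'I_4) (A B : {set 'I_4}) : (i < j)%N ->
  A \subset [set i; j] -> B \subset [set i; j] ->
  clsgn A B = (if (j \in A) && (i \in B) then -1 else 1 : C).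
Proof.
move=> lt_ij /subsetP sA /subsetP sB; rewrite /clsgn.
set inv := [set p | _]; suff -> : inv = if (j \in A) && (i \in B) then [set (j, i)] else set0.
  by case: ifP; rewrite ?cards1 ?cards0.
apply/setP => -[x y]; rewrite !inE /=.
case: ifP => [/andP[jA iB] | not_ji]; rewrite ?inE.
- rewrite xpair_eqE; apply/idP/idP => [/and3P[xA yB lt_yx] | /andP[/eqP-> /eqP->]].
    move: (sA x xA) (sB y yB); rewrite !inE.
    by case/orP=> /eqP ex /orP[]/eqP ey; subst; rewrite ?eqxx //; lia.
  by rewrite jA iB lt_ij.
- apply/negP => /and3P[xA yB lt_yx]; move: (sA x xA) (sB y yB) not_ji; rewrite !inE.
  by case/orP=> /eqP ex /orP[]/eqP ey; subst; rewrite ?xA ?yB //; lia.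
Qed.

Lemma symdC A B : symd A B = symd B A.
Proof. exact: setUC. Qed.

Lemma symd0A A : symd set0 A = A.
Proof. by apply/setP => k; rewrite /symd !inE andbF. Qed.

Lemma symdAA A : symd A A = set0.
Proof. by apply/setP => k; rewrite /symd !inE andNb. Qed.

Lemma symd11 (i j : 'I_4) : i != j -> symd [set i] [set j] = [set i; j].
Proof.
move=> ne_ij; apply/setP => k; rewrite /symd !inE.
by case: (eqVneq k i) => [->|_]; rewrite ?ne_ij ?andbF.
Qed.

Lemma symd1_pairl (i j : 'I_4) : i != j -> symd [set i] [set i; j] = [set j].
Proof.
move=> ne_ij; apply/setP => k; rewrite /symd !inE.
by case: (eqVneq k i) => [->|_]; rewrite ?(negbTE ne_ij) ?andbF.
Qed.

Lemma symd1_pairr (i j : 'I_4) : i != j -> symd [set j] [set i; j] = [set i].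
Proof. by move=> ne_ij; rewrite setUC symd1_pairl // eq_sym. Qed.

Lemma clplaneE i j (a b c d : C) D : clplane i j a b c d D =
  a * (D == set0)%:R + b * (D == [set i])%:R + c * (D == [set j])%:R + d * (D == [set i; j])%:R.
Proof. by rewrite clplane.unlock 3!clifD 4!clifZ 4!clbaseE. Qed.

Lemma clplaneD i j (a b c d a' b' c' d' : C) :
  clplane i j a b c d + clplane i j a' b' c' d' = clplane i j (a + a') (b + b') (c + c') (d + d').
Proof. by apply/ffunP => D; rewrite clifD !clplaneE; ring. Qed.

Lemma clplaneZ i j (k a b c d : C) :
  k *: clplane i j a b c d = clplane i j (k * a) (k * b) (k * c) (k * d).
Proof. by apply/ffunP => D; rewrite clifZ !clplaneE; ring. Qed.

Lemma clbase_plane (i j : 'I_4) :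
  [/\ clbase set0 = clplane i j (1 : C) 0 0 0, clbase [set i] = clplane i j 0 1 0 0,
      clbase [set j] = clplane i j 0 0 1 0 & clbase [set i; j] = clplane i j 0 0 0 1].
Proof.
by split; apply/ffunP => D; rewrite clbaseE clplaneE; ring.
Qed.

Lemma clmul_plane (i j : 'I_4) (a b c d a' b' c' d' : C) : (i < j)%N ->
  clmul (clplane i j a b c d) (clplane i j a' b' c' d') =
  clplane i j (a * a' + b * b' + c * c' - d * d') (a * b' + b * a' - c * d' + d * c')
              (a * c' + c * a' + b * d' - d * b') (a * d' + d * a' + b * c' - c * b').
Proof.
move=> lt_ij; have ne_ij : i != j by rewrite neq_ltn lt_ij.
have ne_ji : j != i by rewrite eq_sym.
rewrite clplane.unlock !(clmulDl, clmulDr, clmulZl, clmulZr) !clmul_base.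
rewrite !(symdC _ set0) !symd0A !symdAA (symdC [set j]) symd11 //.
rewrite !(symdC [set i; j]) symd1_pairl // symd1_pairr //.
rewrite !(@clsgn_pair i j _ _ lt_ij) ?sub0set ?sub1set ?subxx ?inE ?eqxx ?orbT //=.
rewrite ?(negbTE ne_ij) ?(negbTE ne_ji) ?andbF ?andFb ?andbT.
have [-> -> -> ->] := clbase_plane i j.
by rewrite !(clplaneZ, clplaneD); congr clplane; ring.
Qed.

End CliffordAlgebra.

Section PlaneRotations.
Variable R : realType.
Variables i j : 'I_4.
Hypothesis lt_ij : (i < j)%N.

Definition clvec (x : R) : @clif R := clplane i j 0 (Cr (sin x)) (Cr (- cos x)) 0.
Definition clrot (x : R) : @clif R := clplane i j (Cr (cos x)) 0 0 (Cr (sin x)).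

Lemma clscal_plane (c : complex R) : clscal c = clplane i j c 0 0 0.
Proof. by apply/ffunP => D; rewrite clplaneE ffunE; case: (D == set0) => /=; ring. Qed.

Lemma clrot0 : clrot 0 = cl1.
Proof. by rewrite /cl1 clscal_plane /clrot cos0 sin0. Qed.

Lemma clrotpi : clrot pi = clz.
Proof. by rewrite /clz clscal_plane /clrot cospi sinpi; congr clplane; complex_eq; rewrite ?oppr0. Qed.

Lemma clmul_vec_vec x y : clmul (clvec x) (clvec y) = clrot (y - x).
Proof. by rewrite clmul_plane //; congr clplane; complex_eq; rewrite ?cosB ?sinB; ring. Qed.

Lemma clmul_vec_rot x y : clmul (clvec x) (clrot y) = clvec (x + y).
Proof. by rewrite clmul_plane //; congr clplane; complex_eq; rewrite ?cosD ?sinD; ring. Qed.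

Lemma clmul_rot_vec x y : clmul (clrot y) (clvec x) = clvec (x - y).
Proof. by rewrite clmul_plane //; congr clplane; complex_eq; rewrite ?cosB ?sinB; ring. Qed.

Lemma clmul_rot_rot x y : clmul (clrot x) (clrot y) = clrot (x + y).
Proof. by rewrite clmul_plane //; congr clplane; complex_eq; rewrite ?cosD ?sinD; ring. Qed.

End PlaneRotations.

Definition axis1 (a : 'I_2) : 'I_4 := inord (2 * a).
Definition axis2 (a : 'I_2) : 'I_4 := inord (2 * a).+1.

Lemma axis1_lt2 a : (axis1 a < axis2 a)%N.
Proof. by case: a => -[|[|]] // lt_a2; rewrite /axis1 /axis2 /= !inordK. Qed.

Section DihedralRoots.
Variable R : realType.
Local Notation C := (complex R).
Local Notation rootv := (@rootv R).

Definition angle (m p : nat) : R := p%:R * pi / m%:R.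

Lemma angleS m p : angle m p.+1 = angle m p + pi / m%:R.
Proof. by rewrite /angle -addn1 natrD [(_ + 1) * _]mulrDl mul1r mulrDl. Qed.

Lemma angle1 m : angle m 1 = pi / m%:R.
Proof. by rewrite /angle mul1r. Qed.

Lemma angle_id m : (0 < m)%N -> angle m m = pi.
Proof. by move=> m_gt0; rewrite /angle mulrAC divff ?mul1r // pnatr_eq0 -lt0n. Qed.

Lemma angleDm m p : (0 < m)%N -> angle m (p + m) = angle m p + pi.
Proof. by move=> m_gt0; rewrite -(angle_id m_gt0) /angle natrD !mulrDl. Qed.

Local Notation vec a := (clvec (axis1 a) (axis2 a)).

Lemma gamma_vec4 (x y z w : C) D : gamma (vec4 x y z w) D =
  x * (D == [set inord 0])%:R + y * (D == [set inord 1])%:R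
  + z * (D == [set inord 2])%:R + w * (D == [set inord 3])%:R.
Proof.
pose F k := if D == [set inord k] then vec4 x y z w 0 (inord k) else 0.
rewrite ffunE (eq_bigr (F \o val)) => [|k _]; last by rewrite /F /= inord_val.
rewrite -(big_mkord xpredT F) !big_nat_recr //= big_geq // /F !mxE !inordK //=.
have ifE (b : bool) (c : C) : (if b then c else 0) = c * b%:R.
  by case: b; rewrite ?mulr1 ?mulr0.
by rewrite !ifE add0r.
Qed.

Lemma gamma_rootv a m p : gamma (rootv a m p) = vec a (angle m p).
Proof.
apply/ffunP => D; rewrite clplaneE /rootv /alpha /beta /axis1 /axis2.
by case: a => -[|[|]] //= lt_a2; rewrite gamma_vec4 ?muln0 ?muln1; ring.
Qed.

Lemma bil_rootv a m p q :
  bil (rootv a m p) (rootv a m q) = Cr (cos (angle m q - angle m p)).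
Proof.
rewrite cosB; case: a => -[|[|]] //= lt_a2;
  by rewrite /bil !big_ord_recr big_ord0 /= !mxE /=; complex_eq; ring.
Qed.

Lemma rootvDm a m p : (0 < m)%N -> rootv a m (p + m) = - rootv a m p :> 'rV[C]_4.
Proof.
move=> m_gt0; apply/rowP => k; rewrite !mxE /rootv /alpha /beta.
rewrite -![_ * pi / _]/(angle _ _) angleDm // sinDpi cosDpi.
by case: a => -[|[|]] //= lt_a2; case: k => -[|[|[|[|]]]] //= lt_k4; rewrite !mxE /=; complex_eq; ring.
Qed.

Lemma bil_rootv_self a m p : bil (rootv a m p) (rootv a m p) = 1.
Proof. by rewrite bil_rootv subrr cos0. Qed.

Lemma refl_rootv_self a m p : refl (rootv a m p) (rootv a m p) = - rootv a m p :> 'rV[C]_4.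
Proof.
rewrite /refl bil_rootv_self divr1 mulr1.
by rewrite scalerDl scale1r opprD addrA subrr add0r.
Qed.

Lemma refl_rootvS a m p :
  refl (rootv a m p.+1) (rootv a m p) = - rootv a m p.+2 :> 'rV[C]_4.
Proof.
have angleSS : angle m p.+2 = angle m p.+1 + pi / m%:R by rewrite angleS.
have angleP : angle m p = angle m p.+1 - pi / m%:R by rewrite angleS addrK.
have angle_step : angle m p.+1 - angle m p = pi / m%:R.
  by rewrite angleP opprB addrC subrK.
rewrite /refl bil_rootv_self divr1 bil_rootv angle_step.
apply/rowP => k; rewrite !mxE /rootv /alpha /beta.
rewrite -![_ * pi / _]/(angle _ _) angleSS angleP.
case: a => -[|[|]] //= lt_a2; case: k => -[|[|[|[|]]]] //= lt_k4; rewrite !mxE /=;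
  complex_eq; rewrite ?sinD ?cosD ?sinN ?cosN; ring.
Qed.

End DihedralRoots.

Arguments angle {R}.

Section WeylFactor.
Variable R : realType.
Variables (m1 m2 : nat) (a : 'I_2).
Local Notation m := (mm m1 m2 a).
Local Notation rootv := (@rootv R).
Local Notation vec := (clvec (axis1 a) (axis2 a)).
Local Notation rot := (clrot (axis1 a) (axis2 a)).
Hypothesis m_gt0 : (0 < m)%N.

Lemma inR_rootv p : (1 <= p <= 2 * m)%N -> inR m1 m2 (rootv a m p).
Proof. by case: a => -[|[|]] //= lt_a2 p_range; [left | right]; exists p. Qed.

Lemma gamma_rootv_mul1 p : clmul (gamma (rootv a m p)) cl1 = gamma (rootv a m p).
Proof. by rewrite gamma_rootv -(clrot0 R (axis1 a) (axis2 a)) clmul_vec_rot ?axis1_lt2 ?addr0. Qed.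

Lemma Wt_gamma_rootv p : (1 <= p <= 2 * m)%N -> Wt m1 m2 (gamma (rootv a m p)).
Proof.
by move=> p_range; rewrite -gamma_rootv_mul1; apply: Wt_gen (Wt_one _ _); apply: inR_rootv.
Qed.

Lemma ft_vec : ft m1 m2 a = vec pi :> @clif R.
Proof. by rewrite /ft gamma_rootv angle_id. Qed.

Lemma rt_rot : rt m1 m2 a = rot (pi / m%:R) :> @clif R.
Proof.
rewrite /rt !gamma_rootv angle_id // angle1 -(clrotpi R (axis1 a) (axis2 a)).
by rewrite clmul_vec_vec ?axis1_lt2 // clmul_rot_rot ?axis1_lt2 // addrCA subrr addr0.
Qed.

Lemma gamma_rootvS p : gamma (rootv a m p.+1) = clmul (gamma (rootv a m p)) (rt m1 m2 a).
Proof. by rewrite rt_rot !gamma_rootv clmul_vec_rot ?axis1_lt2 // angleS. Qed.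

Lemma rt_gamma_rootvS p : clmul (rt m1 m2 a) (gamma (rootv a m p.+1)) = gamma (rootv a m p).
Proof. by rewrite rt_rot !gamma_rootv clmul_rot_vec ?axis1_lt2 // angleS addrK. Qed.

Lemma ft_sqr : clmul (ft m1 m2 a) (ft m1 m2 a) = cl1 :> @clif R.
Proof. by rewrite ft_vec clmul_vec_vec ?axis1_lt2 // subrr clrot0. Qed.

Lemma Wt_rt : Wt m1 m2 (rt m1 m2 a : @clif R).
Proof.
have -> : rt m1 m2 a = clmul (gamma (rootv a m m)) (clmul (gamma (rootv a m m.+1)) cl1).
  rewrite gamma_rootv_mul1 !gamma_rootv clmul_vec_vec ?axis1_lt2 // rt_rot angleS.
  by rewrite addrAC subrr add0r.
by apply: Wt_gen; [|apply: Wt_gen (Wt_one _ _)]; apply: inR_rootv; lia.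
Qed.

Variable kappa : 'rV[complex R]_4 -> R.
Hypothesis kappa_inv : W_invariant m1 m2 kappa.

Lemma kappa_opp_rootv p : (1 <= p <= 2 * m)%N ->
  kappa (- rootv a m p) = kappa (rootv a m p).
Proof. by move=> p_range; rewrite -refl_rootv_self kappa_inv //; apply: inR_rootv. Qed.

Lemma kappa_rootvSS p : (1 <= p)%N -> (p.+2 <= 2 * m)%N ->
  kappa (rootv a m p.+2) = kappa (rootv a m p).
Proof.
move=> p_gt0 p_le; rewrite -kappa_opp_rootv -?refl_rootvS ?kappa_inv //;
  apply: inR_rootv; lia.
Qed.

Lemma kappa_rootv p : (1 <= p <= 2 * m)%N ->
  kappa (rootv a m p) = if odd p then kodd m1 m2 kappa a else keven m1 m2 kappa a.
Proof.
elim: p {-2}p (leqnn p) => [|n IHn] [|[|[|p]]] //= le_pn p_range.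
by rewrite kappa_rootvSS ?IHn ?negbK //; lia.
Qed.

Lemma keven_odd_m : odd m -> keven m1 m2 kappa a = kodd m1 m2 kappa a.
Proof.
move=> m_odd; have := @kappa_rootv m.+1; rewrite /= m_odd /= => <-; last by lia.
by rewrite -addn1 addnC rootvDm // kappa_opp_rootv //; lia.
Qed.

End WeylFactor.

Lemma sum_expS_root1 (F : idomainType) (y : F) n : y ^+ n = 1 ->
  \sum_(p < n) y ^+ p.+1 = if y == 1 then n%:R else 0.
Proof.
move=> yn1; case: eqP => [->|/eqP y_neq1].
  by under eq_bigr do rewrite expr1n; rewrite sumr_const card_ord.
have /eqP : (y - 1) * \sum_(p < n) y ^+ p = 0 by rewrite -subrX1 yn1 subrr.
rewrite mulf_eq0 subr_eq0 (negbTE y_neq1) /= => /eqP sum0.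
by under eq_bigr do rewrite exprS; rewrite -mulr_sumr sum0 mulr0.
Qed.

Section ZetaPowers.
Variable R : realType.
Variable m : nat.
Hypothesis m_gt0 : (0 < m)%N.
Local Notation zeta := (@zeta R m).

Lemma zeta_expn p : zeta ^+ p = Complex (cos (angle m p)) (sin (angle m p)).
Proof.
elim: p => [|p IHp]; first by rewrite expr0 /angle !mul0r cos0 sin0.
by rewrite exprSr IHp angleS cosD sinD /zeta; complex_eq; ring.
Qed.

Lemma zeta_expm : zeta ^+ m = -1.
Proof. by rewrite zeta_expn angle_id // cospi sinpi; complex_eq; rewrite ?oppr0. Qed.

Lemma zeta_expm2 : zeta ^+ (2 * m) = 1.
Proof. by rewrite mulnC exprM zeta_expm sqrrN expr1n. Qed.

Lemma zeta_neq0 : zeta != 0.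
Proof.
apply: contra_eq_neq zeta_expm2 => ->.
by rewrite expr0n muln_eq0 (negbTE (lt0n_neq0 m_gt0)) eq_sym oner_eq0.
Qed.

Lemma sin_angle_gt0 n : (0 < n < m)%N -> 0 < sin (angle m n :> R).
Proof.
move=> /andP[n_gt0 lt_nm]; apply: sin_gt0_pi; apply/andP; split.
  by rewrite /angle divr_gt0 ?mulr_gt0 ?pi_gt0 ?ltr0n.
by rewrite /angle ltr_pdivrMr ?ltr0n // mulrC ltr_pM2l ?pi_gt0 ?ltr_nat.
Qed.

Lemma sin_angle_neq0 n : (0 < n < 2 * m)%N -> n != m -> sin (angle m n :> R) != 0.
Proof.
move=> n_range n_neqm; case: (ltnP n m) => [lt_nm | le_mn].
  by rewrite gt_eqF // sin_angle_gt0 // lt_nm andbT; case/andP: n_range.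
rewrite -(subnK le_mn) angleDm // sinDpi oppr_eq0 gt_eqF // sin_angle_gt0 //; lia.
Qed.

Lemma zeta_expn_eq1 n : (n < 2 * m)%N -> (zeta ^+ n == 1) = (n == 0)%N.
Proof.
move=> lt_n2m; case: (eqVneq n 0%N) => [->|n_neq0]; first by rewrite expr0 eqxx.
case: (eqVneq n m) => [->|n_neqm].
  by rewrite zeta_expm -subr_eq0 -opprD oppr_eq0 (pnatr_eq0 _ 2).
have : sin (angle m n : R) != 0 by rewrite sin_angle_neq0 // lt0n n_neq0.
by apply: contraNF => /eqP; rewrite zeta_expn => -[_ ->].
Qed.

Lemma zeta_expn_eqN1 n : (n < 2 * m)%N -> (zeta ^+ n == -1) = (n == m)%N.
Proof.
move=> lt_n2m; case: (eqVneq n m) => [->|n_neqm]; first by rewrite zeta_expm eqxx.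
case: (eqVneq n 0%N) => [->|n_neq0].
  by rewrite expr0 -subr_eq0 opprK (pnatr_eq0 _ 2).
have : sin (angle m n : R) != 0 by rewrite sin_angle_neq0 // lt0n n_neq0.
by apply: contraNF => /eqP; rewrite zeta_expn => -[_ ->]; rewrite oppr0.
Qed.

Lemma zeta_exprz_mod (k : int) :
  exists2 n, (n < 2 * m)%N & zeta ^ k = zeta ^+ n /\ (k %% (2 * m)%:Z)%Z = n.
Proof.
have d_gt0 : 0 < (2 * m)%:Z by rewrite ltz_nat muln_gt0.
have /gez0_abs kmod : 0 <= (k %% (2 * m)%:Z)%Z by rewrite modz_ge0 // gt_eqF.
exists (absz (k %% (2 * m)%:Z)%Z); first by rewrite -ltz_nat kmod ltz_pmod.
split; last by rewrite kmod.
rewrite {1}(divz_eq k (2 * m)%:Z) expfzDr ?zeta_neq0 // -exprz_exp exprzAC.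
by rewrite -exprnP zeta_expm2 exp1rz mul1r -{1}kmod.
Qed.

Lemma zeta_exprz_eq1 (k : int) : (zeta ^ k == 1) = ((k %% (2 * m)%:Z)%Z == 0).
Proof. by have [n lt_n2m [-> ->]] := zeta_exprz_mod k; rewrite zeta_expn_eq1. Qed.

Lemma zeta_exprz_eqN1 (k : int) : (zeta ^ k == -1) = ((k %% (2 * m)%:Z)%Z == m%:Z).
Proof. by have [n lt_n2m [-> ->]] := zeta_exprz_mod k; rewrite zeta_expn_eqN1 // eqz_nat. Qed.

End ZetaPowers.

Section WeightedRootSum.
Variable R : realType.
Variables (m1 m2 : nat) (a : 'I_2).
Local Notation m := (mm m1 m2 a).
Local Notation rootv := (@rootv R).
Hypothesis m_gt0 : (0 < m)%N.
Variable kappa : 'rV[complex R]_4 -> R.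
Hypothesis kappa_inv : W_invariant m1 m2 kappa.
Local Notation K1 := (kodd m1 m2 kappa a).
Local Notation K2 := (keven m1 m2 kappa a).

Lemma natrC n : (n%:R : complex R) = Cr n%:R.
Proof. by rewrite complexr0 rmorph_nat. Qed.

Lemma sum_kappa_zeta (k : int) : (2 %| k)%Z ->
  \sum_(p < m) Cr (kappa (rootv a m p.+1)) * (zeta m ^ k) ^+ p.+1 = Cr (Qa m1 m2 kappa a k).
Proof.
move=> /dvdzP[h ->]; set y := zeta m ^ (h * 2).
have y_root : y ^+ m = 1.
  rewrite /y exprnP exprz_exp (_ : _ * _ = (2 * m)%:Z * h); last by rewrite PoszM; ring.
  by rewrite -exprz_exp -exprnP zeta_expm2 ?exp1rz.
(* kappa_p = (K1 + K2)/2 + (-1)^p (K2 - K1)/2 splits the sum into geometric sums in y and -y. *)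
have kappaE (p : 'I_m) : Cr (kappa (rootv a m p.+1)) =
    Cr ((K1 + K2) / 2) + Cr ((K2 - K1) / 2) * (-1) ^+ p.+1.
  rewrite kappa_rootv //; last by have := ltn_ord p; lia.
  by rewrite -signr_odd; case: odd; complex_eq; field.
under eq_bigr do rewrite kappaE mulrDl -mulrA -exprMn mulN1r.
rewrite big_split -!mulr_sumr /= sum_expS_root1 // zeta_exprz_eq1 //.
rewrite /Qa /=; have [m_odd | m_even] := boolP (odd m).
  rewrite keven_odd_m // subrr mul0r (_ : Cr 0 = 0) // mul0r addr0.
  by case: ifP => _; rewrite ?natrC; complex_eq; field.
rewrite (@sum_expS_root1 _ (- y)); last by rewrite exprNn y_root mulr1 -signr_odd (negbTE m_even).
rewrite eqr_oppLR zeta_exprz_eqN1 //.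
case: ifP => [/eqP-> | _].
  have -> : (0 == m%:Z) = false by rewrite eqz_nat eq_sym (negbTE (lt0n_neq0 m_gt0)).
  by rewrite natrC; complex_eq; field.
by case: ifP => _; rewrite ?natrC; complex_eq; field.
Qed.

End WeightedRootSum.

Lemma modz_eq_dvd (x d r : int) : 0 <= r < d -> ((x %% d)%Z == r) = (d %| x - r)%Z.
Proof. by move=> r_range; rewrite -eqz_mod_dvd (modz_small r_range). Qed.

Lemma Qa_reflect (R : realType) m1 m2 kappa (a : 'I_2) (j : int) :
  (0 < mm m1 m2 a)%N ->
  Qa m1 m2 kappa a ((2 * mm m1 m2 a)%:Z - j) = Qa m1 m2 kappa a j :> R.
Proof.
rewrite /Qa /=; move: (mm m1 m2 a) => m m_gt0.
have reflect_m : (2 * m)%:Z - j - m%:Z = - (j - m%:Z) by rewrite PoszM; ring.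
have [r0 rm] : 0 <= (0 : int) < (2 * m)%:Z /\ 0 <= m%:Z < (2 * m)%:Z.
  by split; apply/andP; split; rewrite ?ltz_nat ?lez_nat //; lia.
rewrite !(modz_eq_dvd _ r0) !(modz_eq_dvd _ rm) !subr0 rpredBl ?dvdzz //.
by rewrite reflect_m rpredN.
Qed.

Lemma dvd2_odd_add_sgn (l : nat) (s : bool) : odd l -> (2 %| l%:Z + sgnZ s)%Z.
Proof.
case: l => // l /= l_even; rewrite dvdzE.
by case: s => /=; rewrite -[(1 + 1)%N]/2%N dvdn2 ?addn1 ?subn1 /= ?negbK.
Qed.

Section OneIndexSymmetry.
Variable R : realType.
Local Notation C := (complex R).
Local Notation Ci := (Complex 0 1 : C).
Local Notation rootv := (@rootv R).

Lemma zeta_expz_sgn m (s : bool) p :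
  zeta m ^ (sgnZ s * p%:Z) = if s then Complex (cos (angle m p)) (sin (angle m p))
                             else Complex (cos (angle m p)) (- sin (angle m p)) :> C.
Proof.
case: s; rewrite /= ?mul1r ?mulN1r -?invr_expz -exprnP zeta_expn //.
by apply: mulr1_eq; complex_eq; rewrite -?(cos2Dsin2 (angle m p)); ring.
Qed.

Lemma bil_zvec_rootv a s m p :
  bil (zvec a s) (rootv a m p) = - (sgnC s * Ci) * zeta m ^ (sgnZ s * p%:Z).
Proof.
rewrite zeta_expz_sgn /angle; case: a => -[|[|]] // lt_a2; case: s;
  by rewrite /bil !big_ord_recr big_ord0 /= !mxE /=; complex_eq; ring.
Qed.

Lemma OactE m1 m2 kappa (U : lmodType C) (rho : @clif R -> {linear U -> U}) a s w :
  Oact m1 m2 kappa rho (zvec a s) w = \sum_(p < mm m1 m2 a)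
    (Cr (kappa (rootv a (mm m1 m2 a) p.+1)) * bil (zvec a s) (rootv a (mm m1 m2 a) p.+1))
      *: rho (gamma (rootv a (mm m1 m2 a) p.+1)) w.
Proof.
have bil_other b v : val b != val a -> bil (zvec a s) (rootv b (mm m1 m2 b) v) = 0.
  by case: a b => -[|[|]] // ? [[|[|]] //] ? _; case: s;
    rewrite /bil !big_ord_recr big_ord0 /= !mxE /=; complex_eq; ring.
rewrite /Oact; case: a bil_other => -[|[|]] // lt_a2 bil_other.
  rewrite [X in _ + X]big1 ?addr0 // => q _.
  by rewrite (bil_other (Ordinal (isT : (1 < 2)%N))) // mulr0 scale0r.
rewrite [X in X + _]big1 ?add0r // => q _.
by rewrite (bil_other (Ordinal (isT : (0 < 2)%N))) // mulr0 scale0r.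
Qed.

Lemma Oact_scale m1 m2 kappa (U : lmodType C) (rho : @clif R -> {linear U -> U}) x c w :
  Oact m1 m2 kappa rho x (c *: w) = c *: Oact m1 m2 kappa rho x w.
Proof.
rewrite /Oact scalerDr !scaler_sumr.
by congr (_ + _); apply: eq_bigr => p _; rewrite linearZ /= !scalerA mulrC.
Qed.

End OneIndexSymmetry.

Section RotationEigenvector.
Variable R : realType.
Variables (m1 m2 : nat) (a : 'I_2).
Local Notation m := (mm m1 m2 a).
Local Notation rootv := (@rootv R).
Hypothesis m_gt0 : (0 < m)%N.
Variable U : lmodType (complex R).
Variable rho : @clif R -> {linear U -> U}.
Hypothesis rhoM : forall g h, Wt m1 m2 g -> Wt m1 m2 h ->
  forall v, rho (clmul g h) v = rho g (rho h v).
Variables (l : nat) (w : U).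
Hypothesis rt_w : rho (rt m1 m2 a) w = zeta m ^+ l *: w.

Lemma rho_gamma_rootvS p : (1 <= p < 2 * m)%N ->
  rho (gamma (rootv a m p.+1)) w = zeta m ^+ l *: rho (gamma (rootv a m p)) w.
Proof.
move=> p_range; rewrite gamma_rootvS // rhoM ?rt_w ?linearZ //; last exact: Wt_rt.
by apply: Wt_gamma_rootv; lia.
Qed.

Lemma rho_gamma_rootvD p d : (1 <= p)%N -> (p + d <= 2 * m)%N ->
  rho (gamma (rootv a m (p + d))) w = zeta m ^+ (l * d) *: rho (gamma (rootv a m p)) w.
Proof.
move=> p_gt0; elim: d => [|d IHd] le_pd; first by rewrite addn0 muln0 scale1r.
by rewrite addnS rho_gamma_rootvS ?IHd ?scalerA -?exprD ?mulnS //; lia.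
Qed.

Lemma rho_rt_ft : (l <= 2 * m)%N ->
  rho (rt m1 m2 a) (rho (ft m1 m2 a) w) = zeta m ^+ (2 * m - l) *: rho (ft m1 m2 a) w.
Proof.
move=> le_l2m.
have Wt_gamma_m : Wt m1 m2 (gamma (rootv a m m)) by apply: Wt_gamma_rootv; lia.
have ft_w : rho (ft m1 m2 a) w = zeta m ^+ l *: rho (rt m1 m2 a) (rho (ft m1 m2 a) w).
  rewrite {1}/ft -rt_gamma_rootvS // rhoM; [|exact: Wt_rt|by apply: Wt_gamma_rootv; lia].
  by rewrite gamma_rootvS // rhoM // ?rt_w ?linearZ //; exact: Wt_rt.
by rewrite {2}ft_w scalerA -exprD subnK // zeta_expm2 // scale1r.
Qed.

Hypothesis l_odd : odd l.

Lemma rho_gamma_rootv p : (1 <= p <= m)%N ->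
  rho (gamma (rootv a m p)) w = - zeta m ^+ (l * p) *: rho (ft m1 m2 a) w.
Proof.
move=> /andP[p_gt0 le_pm]; rewrite /ft.
have := @rho_gamma_rootvD p (m - p) p_gt0; rewrite subnKC // => ->; last by lia.
rewrite scalerA mulNr -exprD -mulnDr subnKC //.
by rewrite mulnC exprM zeta_expm // -signr_odd l_odd opprK scale1r.
Qed.

Variable kappa : 'rV[complex R]_4 -> R.
Hypothesis kappa_inv : W_invariant m1 m2 kappa.

Lemma Oact_zvec s : Oact m1 m2 kappa rho (zvec a s) w =
  (sgnC s * Complex 0 1 * Cr (Qa m1 m2 kappa a (l%:Z + sgnZ s))) *: rho (ft m1 m2 a) w.
Proof.
pose y : complex R := zeta m ^ (l%:Z + sgnZ s).
have termE (p : 'I_m) : bil (zvec a s) (rootv a m p.+1) * - zeta m ^+ (l * p.+1) =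
    sgnC s * Complex 0 1 * y ^+ p.+1.
  rewrite bil_zvec_rootv [y ^+ _]exprnP /y exprz_exp mulrDl expfzDr ?zeta_neq0 //.
  by rewrite -PoszM -exprnP; ring.
rewrite OactE (eq_bigr (fun p : 'I_m => (Cr (kappa (rootv a m p.+1)) *
    (sgnC s * Complex 0 1 * y ^+ p.+1)) *: rho (ft m1 m2 a) w)) => [|p _]; last first.
  rewrite rho_gamma_rootv; last by have := ltn_ord p; lia.
  by rewrite scalerA -[in LHS]mulrA termE.
rewrite -scaler_suml; congr (_ *: _); under eq_bigr do rewrite mulrCA.
by rewrite -mulr_sumr sum_kappa_zeta ?dvd2_odd_add_sgn.
Qed.

End RotationEigenvector.

Theorem lemma5p5 (R : realType) (m1 m2 : nat)
  (hm1 : (0 < m1)%N) (hm2 : (0 < m2)%N)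
  (kappa : 'rV[complex R]_4 -> R) (hkappa : W_invariant m1 m2 kappa)
  (U : lmodType (complex R)) (rho : @clif R -> {linear U -> U})
  (rho1 : forall v, rho cl1 v = v)
  (rhoM : forall g h, Wt m1 m2 g -> Wt m1 m2 h ->
            forall v, rho (clmul g h) v = rho g (rho h v))
  (rhoz : forall v, rho clz v = - v)
  (l1 l2 : nat)
  (hl1 : [&& odd l1, (1 <= l1)%N & (l1 <= 2 * m1 - 1)%N])
  (hl2 : [&& odd l2, (1 <= l2)%N & (l2 <= 2 * m2 - 1)%N])
  (u : U)
  (hu1 : rho (rt m1 m2 0) u = zeta m1 ^+ l1 *: u)
  (hu2 : rho (rt m1 m2 1) u = zeta m2 ^+ l2 *: u) :
  forall (a : 'I_2) (s : bool),
    Oact m1 m2 kappa rho (zvec a s) u =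
      (sgnC s * Complex 0 1
        * Complex (Qa m1 m2 kappa a ((mm l1 l2 a)%:Z + sgnZ s)) 0)
        *: rho (ft m1 m2 a) u
    /\
    Oact m1 m2 kappa rho (zvec a s) (Oact m1 m2 kappa rho (zvec a (~~ s)) u) =
      Complex (Qa m1 m2 kappa a ((mm l1 l2 a)%:Z - sgnZ s) ^+ 2) 0 *: u.
Proof.
move=> a s.
have a01 : a = 0 \/ a = 1 by case: a => -[|[|]] // ?; [left | right]; apply: val_inj.
have m_gt0 : (0 < mm m1 m2 a)%N by case: a01 => ->.
have /and3P[l_odd l_gt0 l_le] : [&& odd (mm l1 l2 a), (1 <= mm l1 l2 a)%N
    & (mm l1 l2 a <= 2 * mm m1 m2 a - 1)%N] by case: a01 => ->.
have rt_u : rho (rt m1 m2 a) u = zeta (mm m1 m2 a) ^+ mm l1 l2 a *: u.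
  by case: a01 => ->.
have O_u := Oact_zvec m_gt0 rhoM rt_u l_odd hkappa.
split; first exact: O_u.
have Wt_ft : Wt m1 m2 (ft m1 m2 a : @clif R) by apply: Wt_gamma_rootv; lia.
have rt_ft_u := rho_rt_ft m_gt0 rhoM rt_u (leq_trans l_le (leq_subr _ _)).
have ft_odd : odd (2 * mm m1 m2 a - mm l1 l2 a) by rewrite oddB ?odd_mul //; lia.
rewrite O_u Oact_scale (Oact_zvec m_gt0 rhoM rt_ft_u ft_odd hkappa).
rewrite -rhoM // ft_sqr // rho1 scalerA; congr (_ *: _).
rewrite -subzn; last by lia.
rewrite (_ : _ - _ + _ = (2 * mm m1 m2 a)%:Z - ((mm l1 l2 a)%:Z - sgnZ s)); last by ring.
rewrite Qa_reflect // (_ : sgnZ (~~ s) = - sgnZ s); last by case: s.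
by case: s; complex_eq; ring.
Qed.
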